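(* Assume $N\ge2$, $p>1$ and $M>-\mu^*(1)$. Then for real numbers $0<a<b$ there exists no positive solution $u$ of (E) on $(a,b)$ such that $u(r)\to\infty$ as $r\to a$.
   Context: (E) denotes the ODE $-u_{rr}-\frac{N-1}{r}u_r=|u|^{p-1}u+M|u_r|^{\frac{2p}{p+1}}$ for $r>0$. $\mu^*(1)=(p+1)\left(\frac{p+1}{2p}\right)^{\frac{p}{p+1}}$. *)

From Stdlib Require Import Reals.
From Coquelicot Require Import Coquelicot.
Open Scope R_scope.

(* x^y for x >= 0 and y > 0, with the convention 0^y = 0
   (Stdlib's Rpower 0 y = 1, so we patch the value at 0). *)
Definition rpow (x y : R) : R := if Req_EM_T x 0 then 0 else Rpower x y.

Definition mu_star1 (p : R) : R :=
  (p + 1) * Rpower ((p + 1) / (2 * p)) (p / (p + 1)).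

Definition solves_E (N : nat) (p M : R) (u : R -> R) (a b : R) : Prop :=
  forall r, a < r < b ->
    ex_derive u r /\ ex_derive (Derive u) r /\
    - Derive (Derive u) r - (INR N - 1) / r * Derive u r
      = rpow (Rabs (u r)) (p - 1) * u r
        + M * rpow (Rabs (Derive u r)) (2 * p / (p + 1)).

From Stdlib Require Import Reals Lra Psatz.
From Coquelicot Require Import Coquelicot.
Open Scope R_scope.

(* At a critical point the equation forces [u'' < 0], so a positive solution
   cannot have a minimum where [u' >= 0]; since [u] blows up at [a], it is
   decreasing on [(a, b)].  Fix [0 < c <= 1] with [M >= -(1 - c) mu_star1 p].
   The energy [F = u'^2 u^-(p+1) + c ln u] has
   [F' = -u' u^-(p+1) ((p+1) u'^2 / u - 2 u'' - c u^p)], and the bracket is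
   nonnegative once [u] is large: the sharp Young inequality
   [2 mu_star1 p |u'|^(2p/(p+1)) <= 2 u^p + (p+1) u'^2 / u] absorbs the
   gradient term, and for [u^(p-1)] large the damping term [(N-1)/r u'] is
   absorbed as well because [r > a].  So [F] stays bounded as [r -> a], while
   [F >= c ln u -> +oo]. *)

Lemma exists_in_both_intervals (x1 y1 x2 y2 : R) :
  x1 < y1 -> x2 < y2 -> x1 < y2 -> x2 < y1 ->
  exists z, x1 < z < y1 /\ x2 < z < y2.
Proof.
  intros H1 H2 H3 H4.
  exists ((Rmax x1 x2 + Rmin y1 y2) / 2).
  unfold Rmax, Rmin; destruct (Rle_dec x1 x2), (Rle_dec y1 y2); lra.
Qed.

Lemma blowup_near (f : R -> R) (a c C : R) :
  filterlim f (at_right a) (Rbar_locally p_infty) -> a < c ->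
  exists r, a < r < c /\ forall x, a < x <= r -> C < f x.
Proof.
  intros Hlim Hac.
  destruct (Hlim (fun y => C < y)) as [eps Heps]; [now exists C|].
  destruct (exists_in_both_intervals a c a (a + eps)) as [r [Hr Hr']];
    try (pose proof (cond_pos eps); lra).
  exists r; split; [exact Hr|].
  intros x Hx; apply Heps; [|lra].
  apply Rabs_def1; simpl; unfold minus, plus, opp; simpl; lra.
Qed.

Lemma lt_left_of_derive_pos (f : R -> R) (s l : R) :
  is_derive f s l -> 0 < l ->
  exists d, 0 < d /\ forall x, s - d < x < s -> f x < f s.
Proof.
  intros Hf Hl; apply is_derive_Reals in Hf.
  destruct (Hf l Hl) as [d Hd].
  exists d; split; [apply cond_pos|].
  intros x Hx.
  specialize (Hd (x - s)); replace (s + (x - s)) with x in Hd by ring.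
  assert (Hq : 0 < (f x - f s) / (x - s)).
  { assert (Habs : Rabs ((f x - f s) / (x - s) - l) < l)
      by (apply Hd; [lra|rewrite Rabs_left; lra]).
    apply Rabs_def2 in Habs; lra. }
  assert (Hfx : f x - f s = (f x - f s) / (x - s) * (x - s)) by (field; lra).
  nra.
Qed.

Lemma gt_left_of_derive_neg (f : R -> R) (s l : R) :
  is_derive f s l -> l < 0 ->
  exists d, 0 < d /\ forall x, s - d < x < s -> f s < f x.
Proof.
  intros Hf Hl.
  destruct (lt_left_of_derive_pos (fun x => - f x) s (- l)) as [d [Hd Hleft]].
  - exact (is_derive_opp f s l Hf).
  - lra.
  - exists d; split; [exact Hd|]; intros x Hx; specialize (Hleft x Hx); lra.
Qed.

Lemma lt_right_of_derive_neg (f : R -> R) (s l : R) :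
  is_derive f s l -> l < 0 ->
  exists d, 0 < d /\ forall x, s < x < s + d -> f x < f s.
Proof.
  intros Hf Hl.
  assert (Hrefl : is_derive (fun x => f (- x)) (- s) (- l)).
  { replace (- l) with (scal (-1) l) by (unfold scal; simpl; unfold mult; simpl; ring).
    apply (is_derive_comp f (fun x => - x)); [now rewrite Ropp_involutive|].
    auto_derive; [exact I|ring]. }
  destruct (lt_left_of_derive_pos _ _ _ Hrefl ltac:(lra)) as [d [Hd Hleft]].
  exists d; split; [exact Hd|]; intros x Hx.
  specialize (Hleft (- x) ltac:(lra)); rewrite !Ropp_involutive in Hleft.
  exact Hleft.
Qed.

Lemma lt_of_Derive_pos (f : R -> R) (x y : R) :
  x < y -> (forall t, x <= t <= y -> ex_derive f t) ->
  (forall t, x < t < y -> 0 < Derive f t) -> f x < f y.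
Proof.
  intros Hxy Hder Hpos.
  destruct (MVT_cor2 f (Derive f) x y) as [t [Ht Hxt]]; [exact Hxy| |].
  - intros t Ht; apply is_derive_Reals, Derive_correct, Hder, Ht.
  - specialize (Hpos t Hxt); nra.
Qed.

Lemma le_of_Derive_nonneg (f : R -> R) (x y : R) :
  x <= y -> (forall t, x <= t <= y -> ex_derive f t) ->
  (forall t, x < t < y -> 0 <= Derive f t) -> f x <= f y.
Proof.
  intros [Hxy| <-] Hder Hpos; [|lra].
  destruct (MVT_cor2 f (Derive f) x y) as [t [Ht Hxt]]; [exact Hxy| |].
  - intros t Ht; apply is_derive_Reals, Derive_correct, Hder, Ht.
  - specialize (Hpos t Hxt); nra.
Qed.

Lemma lt_left_of_Derive_nonneg (f : R -> R) (a s : R) :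
  a < s -> (forall x, a < x <= s -> ex_derive f x) -> ex_derive (Derive f) s ->
  0 <= Derive f s -> (Derive f s = 0 -> Derive (Derive f) s < 0) ->
  exists d, 0 < d /\ forall x, s - d < x < s -> f x < f s.
Proof.
  intros Has Hder Hder2 [Hpos|Hcrit] Hconcave.
  - exact (lt_left_of_derive_pos f s _ (Derive_correct f s (Hder s ltac:(lra))) Hpos).
  - symmetry in Hcrit.
    destruct (gt_left_of_derive_neg (Derive f) s _ (Derive_correct _ _ Hder2)
                (Hconcave Hcrit)) as [d [Hd Hleft]].
    rewrite Hcrit in Hleft.
    exists (Rmin d (s - a)); split; [apply Rmin_pos; lra|].
    intros x Hx; pose proof (Rmin_l d (s - a)); pose proof (Rmin_r d (s - a)).
    apply lt_of_Derive_pos; [lra| |].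
    + intros t Ht; apply Hder; lra.
    + intros t Ht; apply Hleft; lra.
Qed.

Lemma derive_neg_of_blowup (f : R -> R) (a b : R) :
  (forall r, a < r < b -> ex_derive f r) ->
  (forall s, a < s < b -> 0 <= Derive f s ->
     exists d, 0 < d /\ forall x, s - d < x < s -> f x < f s) ->
  filterlim f (at_right a) (Rbar_locally p_infty) ->
  forall r, a < r < b -> Derive f r < 0.
Proof.
  intros Hder Hdip Hlim r1 Hr1.
  destruct (Rlt_or_le (Derive f r1) 0) as [Hneg|Hnonneg]; [exact Hneg|exfalso].
  destruct (blowup_near f a r1 (f r1) Hlim) as [r2 [Hr2 Hbig]]; [lra|].
  specialize (Hbig r2 ltac:(lra)).
  destruct (continuity_ab_min f r2 r1) as [m [Hmin Hm]]; [lra| |].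
  { intros t Ht; apply continuity_pt_filterlim, (ex_derive_continuous f), Hder; lra. }
  assert (Hm2 : r2 < m).
  { destruct Hm as [[Hm| <-] _]; [exact Hm|specialize (Hmin r1); lra]. }
  destruct (Rlt_or_le (Derive f m) 0) as [Hm'|Hm'].
  - assert (Hm1 : m < r1) by (destruct Hm as [_ [Hm| ->]]; lra).
    destruct (lt_right_of_derive_neg f m _ (Derive_correct f m (Hder m ltac:(lra))) Hm')
      as [d [Hd Hright]].
    destruct (exists_in_both_intervals m r1 m (m + d)) as [x [Hx Hx']]; try lra.
    specialize (Hright x Hx'); specialize (Hmin x ltac:(lra)); lra.
  - destruct (Hdip m ltac:(lra) Hm') as [d [Hd Hleft]].
    destruct (exists_in_both_intervals r2 m (m - d) m) as [x [Hx Hx']]; try lra.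
    specialize (Hleft x Hx'); specialize (Hmin x ltac:(lra)); lra.
Qed.

Lemma rpow_Rpower (x y : R) : 0 < x -> rpow x y = Rpower x y.
Proof. intros Hx; unfold rpow; destruct (Req_EM_T x 0); [lra|reflexivity]. Qed.

Lemma rpow_0_l (y : R) : rpow 0 y = 0.
Proof. unfold rpow; destruct (Req_EM_T 0 0); [reflexivity|lra]. Qed.

Lemma Rpower_pos (x y : R) : 0 < Rpower x y.
Proof. apply exp_pos. Qed.

Lemma Rpower_pred_mul (x y : R) : 0 < x -> Rpower x (y - 1) * x = Rpower x y.
Proof.
  intros Hx; rewrite <- (Rpower_1 x Hx) at 2.
  rewrite <- Rpower_plus; f_equal; ring.
Qed.

Lemma Rpower_eventually_ge (q k K : R) : 0 < q -> 0 < k ->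
  exists U, forall x, U < x -> K <= k * Rpower x q.
Proof.
  intros Hq Hk; exists (Rpower (Rabs (K / k) + 1) (/ q)); intros x Hx.
  assert (Hx_large : K / k < Rpower x q).
  { apply Rlt_le_trans with (Rpower (Rpower (Rabs (K / k) + 1) (/ q)) q).
    - rewrite Rpower_mult, Rinv_l, Rpower_1 by (pose proof (Rabs_pos (K / k)); lra).
      pose proof (Rle_abs (K / k)); lra.
    - left; apply Rlt_Rpower_l; [exact Hq|split; [apply Rpower_pos|exact Hx]]. }
  apply Rmult_lt_compat_l with (r := k) in Hx_large; [|exact Hk].
  replace (k * (K / k)) with K in Hx_large by (field; lra); lra.
Qed.

(* Weighted AM-GM: the tangent line of exp at 0 bounds both factors of
   [b e^s + (1 - b) = e^(b s) (b e^((1-b) s) + (1 - b) e^(-b s))]. *)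
Lemma Rpower_le_affine (x b : R) : 0 < x -> 0 < b < 1 ->
  Rpower x b <= b * x + (1 - b).
Proof.
  intros Hx Hb; unfold Rpower.
  rewrite <- (exp_ln x Hx) at 2; generalize (ln x); intros s.
  assert (Hsplit : exp s = exp (b * s) * exp ((1 - b) * s))
    by (rewrite <- exp_plus; f_equal; ring).
  assert (Hinv : exp (b * s) * exp (- (b * s)) = 1)
    by (rewrite <- exp_plus, <- exp_0; f_equal; ring).
  pose proof (exp_ineq1_le ((1 - b) * s)); pose proof (exp_ineq1_le (- (b * s))).
  pose proof (exp_pos (b * s)).
  assert (1 <= b * exp ((1 - b) * s) + (1 - b) * exp (- (b * s))) by nra.
  rewrite Hsplit; nra.
Qed.

Lemma mu_star1_pos (p : R) : 0 < p -> 0 < mu_star1 p.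
Proof.
  intros Hp; unfold mu_star1.
  apply Rmult_lt_0_compat; [lra|apply Rpower_pos].
Qed.

Lemma young_mu_star1_normalized (p t : R) : 1 < p -> 0 < t ->
  2 * mu_star1 p * Rpower t (p / (p + 1)) <= 2 + (p + 1) * t.
Proof.
  intros Hp Ht; unfold mu_star1.
  set (k := (p + 1) / (2 * p)); set (beta := p / (p + 1)).
  assert (Hk : 0 < k) by (unfold k; apply Rdiv_lt_0_compat; lra).
  assert (Hbeta : 0 < beta < 1).
  { unfold beta; split; [apply Rdiv_lt_0_compat; lra|].
    apply Rmult_lt_reg_r with (p + 1); [lra|]; field_simplify; lra. }
  replace (2 * ((p + 1) * Rpower k beta) * Rpower t beta)
    with (2 * (p + 1) * (Rpower k beta * Rpower t beta)) by ring.
  rewrite Rpower_mult_distr by assumption.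
  pose proof (Rpower_le_affine (k * t) beta ltac:(nra) Hbeta).
  apply Rle_trans with (2 * (p + 1) * (beta * (k * t) + (1 - beta))); [nra|].
  right; unfold beta, k; field; lra.
Qed.

(* Young's inequality with the sharp constant: substituting [u = e^L],
   [v = e^V] and [t = v^2 / u^(p+1)] reduces it to [young_mu_star1_normalized]. *)
Lemma young_mu_star1 (p u v : R) : 1 < p -> 0 < u -> 0 < v ->
  2 * mu_star1 p * Rpower v (2 * p / (p + 1)) <= 2 * Rpower u p + (p + 1) * (v ^ 2 / u).
Proof.
  intros Hp Hu Hv.
  rewrite <- (exp_ln u Hu), <- (exp_ln v Hv).
  generalize (ln u) (ln v); intros L V; clear Hu Hv; unfold Rpower; rewrite !ln_exp.
  set (s := 2 * V - (p + 1) * L).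
  pose proof (young_mu_star1_normalized p (exp s) Hp (exp_pos s)) as Hyoung.
  unfold Rpower in Hyoung; rewrite ln_exp in Hyoung.
  apply Rmult_le_compat_r with (r := exp (p * L)) in Hyoung; [|left; apply exp_pos].
  assert (Hlhs : exp (p / (p + 1) * s) * exp (p * L) = exp (2 * p / (p + 1) * V))
    by (rewrite <- exp_plus; f_equal; unfold s; field; lra).
  assert (Hrhs : exp s * exp (p * L) = exp V ^ 2 / exp L).
  { replace (exp V ^ 2 / exp L) with (exp (V + V + - L))
      by (rewrite !exp_plus, exp_Ropp; field; apply Rgt_not_eq, exp_pos).
    rewrite <- exp_plus; f_equal; unfold s; ring. }
  rewrite <- Hlhs, <- Hrhs; lra.
Qed.

Definition energy (p c : R) (u : R -> R) (r : R) : R :=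
  Derive u r ^ 2 * Rpower (u r) (- (p + 1)) + c * ln (u r).

Lemma is_derive_energy (p c : R) (u : R -> R) (x : R) :
  0 < u x -> ex_derive u x -> ex_derive (Derive u) x ->
  is_derive (energy p c u) x
    (- Derive u x * Rpower (u x) (- (p + 1)) *
       ((p + 1) * Derive u x ^ 2 / u x - 2 * Derive (Derive u) x
        - c * Rpower (u x) p)).
Proof.
  intros Hu Hd Hdd; unfold energy, Rpower.
  assert (Hinv : exp (- (p + 1) * ln (u x)) * exp (p * ln (u x)) = / u x).
  { rewrite <- exp_plus, <- (exp_ln (u x) Hu), <- exp_Ropp, ln_exp; f_equal; ring. }
  auto_derive; [now repeat split|].
  change (Derive (fun y => Derive u y) x) with (Derive (Derive u) x).
  change (Derive (fun y => u y) x) with (Derive u x).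
  unfold Rdiv; rewrite <- Hinv; ring.
Qed.

Lemma energy_ge_log (p c : R) (u : R -> R) (r : R) : c * ln (u r) <= energy p c u r.
Proof.
  unfold energy.
  pose proof (pow2_ge_0 (Derive u r)); pose proof (Rpower_pos (u r) (- (p + 1))).
  nra.
Qed.

Lemma cross_term_le (B c q u v X : R) :
  0 < c -> 0 < q -> 0 < u -> B ^ 2 * u <= c ^ 2 * q * X ->
  2 * B * v <= c * X + c * q * (v ^ 2 / u).
Proof.
  intros Hc Hq Hu HX.
  assert (Hsos : c * q * u * (c * X + c * q * (v ^ 2 / u) - 2 * B * v)
                 = (c * q * v - B * u) ^ 2 + (c ^ 2 * q * X - B ^ 2 * u) * u)
    by (field; lra).
  assert (0 <= c * q * u * (c * X + c * q * (v ^ 2 / u) - 2 * B * v)).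
  { rewrite Hsos; apply Rplus_le_le_0_compat; [apply pow2_ge_0|].
    apply Rmult_le_pos; lra. }
  assert (0 < c * q * u) by (repeat apply Rmult_lt_0_compat; lra).
  nra.
Qed.

Lemma exists_absorbing_weight (mu M : R) : 0 < mu -> - mu < M ->
  exists c, 0 < c <= 1 /\ - ((1 - c) * mu) <= M.
Proof.
  intros Hmu HM; exists (Rmin 1 ((M + mu) / mu)).
  assert (Hfrac : 0 < (M + mu) / mu) by (apply Rdiv_lt_0_compat; lra).
  unfold Rmin; destruct (Rle_dec 1 ((M + mu) / mu)) as [Hle|Hgt].
  - split; [lra|].
    apply Rmult_le_compat_r with (r := mu) in Hle; [|lra].
    replace ((M + mu) / mu * mu) with (M + mu) in Hle by (field; lra); lra.
  - split; [lra|]; right; field; lra.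
Qed.

Section BlowupSolution.

Variables (N : nat) (p M : R) (u : R -> R) (a b : R).
Hypothesis HE : solves_E N p M u a b.
Hypothesis Hpos : forall r, a < r < b -> 0 < u r.
Hypothesis Hlim : filterlim u (at_right a) (Rbar_locally p_infty).

Lemma solution_critical_concave (r : R) :
  a < r < b -> Derive u r = 0 -> Derive (Derive u) r < 0.
Proof.
  intros Hr Hcrit; destruct (HE r Hr) as [_ [_ Heq]].
  pose proof (Hpos r Hr) as Hu.
  rewrite Hcrit, Rabs_R0, rpow_0_l, Rabs_pos_eq, rpow_Rpower in Heq by lra.
  pose proof (Rpower_pos (u r) (p - 1)); nra.
Qed.

Lemma solution_decreasing (r : R) : a < r < b -> Derive u r < 0.
Proof.
  apply derive_neg_of_blowup; [|intros s Hs Hnonneg|exact Hlim].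
  - intros r' Hr'; apply (HE r' Hr').
  - apply (lt_left_of_Derive_nonneg u a s); try tauto.
    + intros x Hx; apply HE; lra.
    + apply HE, Hs.
    + apply solution_critical_concave, Hs.
Qed.

Variable c : R.
Hypotheses (HN : (2 <= N)%nat) (Hp : 1 < p) (Ha : 0 < a).
Hypotheses (Hc : 0 < c <= 1) (HMc : - ((1 - c) * mu_star1 p) <= M).

Lemma energy_slope_nonneg (x : R) : a < x < b ->
  ((INR N - 1) / a) ^ 2 <= c ^ 2 * (p + 1) * Rpower (u x) (p - 1) ->
  0 <= (p + 1) * Derive u x ^ 2 / u x - 2 * Derive (Derive u) x - c * Rpower (u x) p.
Proof.
  intros Hx Hlarge; destruct (HE x Hx) as [_ [_ Heq]].
  pose proof (Hpos x Hx) as Hu; pose proof (solution_decreasing x Hx) as Hdec.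
  rewrite Rabs_pos_eq, rpow_Rpower, Rpower_pred_mul, Rabs_left, rpow_Rpower
    in Heq by lra.
  set (v := - Derive u x) in Heq.
  set (X := Rpower (u x) p) in *; set (W := Rpower v (2 * p / (p + 1))) in Heq.
  set (B := (INR N - 1) / x) in Heq.
  replace ((p + 1) * Derive u x ^ 2 / u x) with ((p + 1) * (v ^ 2 / u x))
    by (unfold v; field; lra).
  assert (HB : 0 <= B <= (INR N - 1) / a).
  { apply le_INR in HN; simpl in HN.
    unfold B, Rdiv; split; [apply Rmult_le_pos; [lra|left; apply Rinv_0_lt_compat; lra]|].
    apply Rmult_le_compat_l; [lra|apply Rinv_le_contravar; lra]. }
  assert (Hcross : 2 * B * v <= c * X + c * (p + 1) * (v ^ 2 / u x)).
  { apply cross_term_le; try lra.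
    unfold X; rewrite <- Rpower_pred_mul by lra.
    assert (B ^ 2 <= c ^ 2 * (p + 1) * Rpower (u x) (p - 1))
      by (apply Rle_trans with (((INR N - 1) / a) ^ 2); [apply pow_incr|]; lra).
    nra. }
  pose proof (young_mu_star1 p (u x) v Hp Hu ltac:(unfold v; lra)) as Hyoung.
  fold X W in Hyoung.
  assert (HW : 0 <= W) by (left; apply Rpower_pos).
  assert (0 <= (M + (1 - c) * mu_star1 p) * W) by (apply Rmult_le_pos; lra).
  assert (0 <= (1 - c) * (2 * X + (p + 1) * (v ^ 2 / u x) - 2 * mu_star1 p * W))
    by (apply Rmult_le_pos; lra).
  replace (Derive u x) with (- v) in Heq by (unfold v; ring).
  lra.
Qed.

Lemma energy_le (r r1 : R) : a < r <= r1 -> r1 < b ->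
  (forall x, a < x <= r1 ->
     ((INR N - 1) / a) ^ 2 <= c ^ 2 * (p + 1) * Rpower (u x) (p - 1)) ->
  energy p c u r <= energy p c u r1.
Proof.
  intros Hr Hr1 Hlarge.
  pose (Hder x (Hx : a < x < b) := is_derive_energy p c u x (Hpos x Hx)
                                      (proj1 (HE x Hx)) (proj1 (proj2 (HE x Hx)))).
  apply le_of_Derive_nonneg; [lra| |].
  - intros t Ht; eexists; apply Hder; lra.
  - intros t Ht; rewrite (is_derive_unique _ _ _ (Hder t ltac:(lra))).
    pose proof (solution_decreasing t ltac:(lra)).
    pose proof (Rpower_pos (u t) (- (p + 1))).
    apply Rmult_le_pos; [apply Rmult_le_pos; lra|].
    apply energy_slope_nonneg; [lra|apply Hlarge; lra].
Qed.

End BlowupSolution.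

Theorem proposition4p8 (N : nat) (p M : R) :
  (2 <= N)%nat -> 1 < p -> - mu_star1 p < M ->
  forall a b : R, 0 < a -> a < b ->
  ~ (exists u : R -> R,
       solves_E N p M u a b /\
       (forall r, a < r < b -> 0 < u r) /\
       filterlim u (at_right a) (Rbar_locally p_infty)).
Proof.
  intros HN Hp HM a b Ha Hab [u [HE [Hpos Hlim]]].
  destruct (exists_absorbing_weight _ _ (mu_star1_pos p ltac:(lra)) HM)
    as [c [Hc HMc]].
  destruct (Rpower_eventually_ge (p - 1) (c ^ 2 * (p + 1)) (((INR N - 1) / a) ^ 2))
    as [U HU]; [lra|nra|].
  destruct (blowup_near u a b U Hlim Hab) as [r1 [Hr1 Hlarge]].
  destruct (blowup_near u a r1 (exp (energy p c u r1 / c)) Hlim) as [r [Hr Hr_large]];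
    [lra|].
  assert (Hmono : energy p c u r <= energy p c u r1).
  { apply (energy_le N p M u a b HE Hpos Hlim c HN Hp Ha Hc HMc); [lra|lra|].
    intros x Hx; apply HU, Hlarge, Hx. }
  assert (Hlog : energy p c u r1 / c < ln (u r)).
  { rewrite <- (ln_exp (energy p c u r1 / c)).
    apply ln_increasing; [apply exp_pos|apply Hr_large; lra]. }
  pose proof (energy_ge_log p c u r).
  assert (energy p c u r1 = c * (energy p c u r1 / c)) by (field; lra).
  nra.
Qed.
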